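(* Let $\mathfrak h\in\mathrm{Mult}_\rho$, let $\Delta$ be a segment admissible to $\mathfrak h$, and let $\Delta'=[a',b']_\rho$ be linked to $\Delta$ with $\Delta'>\Delta$, such that $(\Delta,\Delta',\mathfrak h)$ satisfies the non-overlapping property. Then for every segment $\widetilde\Delta=[\widetilde a,b']_\rho$ with $\widetilde a\ge a'$ that is linked to $\Delta$, the triple $(\Delta,\widetilde\Delta,\mathfrak h)$ also satisfies the non-overlapping property.
   Context: Segments: for integers $a\le b$, $[a,b]_\rho$ (think of the integer interval $\{a,\dots,b\}$), with $a(\Delta)=a$, $b(\Delta)=b$, and inclusion of segments as intervals. Two segments are linked if their union is a segment (an interval) and neither contains the other; for linked $\Delta,\Delta'$ write $\Delta<\Delta'$ (or $\Delta'>\Delta$) if $b(\Delta)<b(\Delta')$. A multisegment is a finite multiset of nonempty segments; $\mathrm{Mult}_\rho$ is the set of multisegments. Write $[x,y]_\rho\prec^L[x',y']_\rho$ if $x<x'$, or $x=x'$ and $y<y'$. A segment $\Delta=[a,b]_\rho$ is admissible to $\mathfrak h$ if $\mathfrak h$ contains a segment $[a,c]_\rho$ with $c\ge b$. Removal sequence: for $\Delta=[a,b]_\rho$ admissible to $\mathfrak h$, let $\Delta_1=[a_1,b_1]_\rho$ be a shortest segment of $\mathfrak h$ with $a_1=a$ and $b_1\ge b$; recursively, let $\Delta_i=[a_i,b_i]_\rho$ be the $\prec^L$-minimal segment of $\mathfrak h$ with $a_{i-1}<a_i$ and $b\le b_i<b_{i-1}$, stopping when none exists; $\Delta_1,\dots,\Delta_r$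 is the removal sequence for $(\Delta,\mathfrak h)$. Non-overlapping property: for $\Delta$ admissible to $\mathfrak h$ and $\Delta'$ linked to $\Delta$ with $\Delta'>\Delta$, the triple $(\Delta,\Delta',\mathfrak h)$ satisfies it if, for the shortest segment $\overline\Delta$ in the removal sequence for $(\Delta,\mathfrak h)$ that contains the point $a(\Delta')-1$, one has $\Delta'\not\subset\overline\Delta$. *)

(* segments [a,b]_rho are modelled by pairs of integers (a,b). *)
From Stdlib Require Import ZArith List.
Import ListNotations.
Open Scope Z_scope.

Definition seg : Type := (Z * Z)%type.
Definition sa (s : seg) : Z := fst s.
Definition sb (s : seg) : Z := snd s.

Definition seg_valid (s : seg) : Prop := sa s <= sb s.

(* a multisegment: finite multiset (list up to order) of nonempty segments *)
Definition mult := list seg.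
Definition mult_valid (h : mult) : Prop := forall s, In s h -> seg_valid s.

Definition seg_mem (s : seg) (x : Z) : Prop := sa s <= x <= sb s.

Definition seg_sub (s t : seg) : Prop := forall x, seg_mem s x -> seg_mem t x.

Definition linked (s t : seg) : Prop :=
  (exists c d : Z, forall x, (seg_mem s x \/ seg_mem t x) <-> c <= x <= d)
  /\ ~ seg_sub s t /\ ~ seg_sub t s.

Definition seg_lt (s t : seg) : Prop := linked s t /\ sb s < sb t.

Definition precL (s t : seg) : Prop := sa s < sa t \/ (sa s = sa t /\ sb s < sb t).
Definition precL_le (s t : seg) : Prop := s = t \/ precL s t.

Definition admissible (D : seg) (h : mult) : Prop :=
  exists c, In (sa D, c) h /\ sb D <= c.

Definition first_ok (D : seg) (h : mult) (s : seg) : Prop :=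
  In s h /\ sa s = sa D /\ sb D <= sb s /\
  (forall t, In t h -> sa t = sa D -> sb D <= sb t -> sb s <= sb t).

Definition next_cand (D : seg) (h : mult) (prev t : seg) : Prop :=
  In t h /\ sa prev < sa t /\ sb D <= sb t /\ sb t < sb prev.

Definition next_ok (D : seg) (h : mult) (prev s : seg) : Prop :=
  next_cand D h prev s /\ (forall t, next_cand D h prev t -> precL_le s t).

Inductive rem_chain (D : seg) (h : mult) : seg -> list seg -> Prop :=
| rem_chain_end (prev : seg) :
    (forall t, ~ next_cand D h prev t) -> rem_chain D h prev [prev]
| rem_chain_step (prev s : seg) (l : list seg) :
    next_ok D h prev s -> rem_chain D h s l -> rem_chain D h prev (prev :: l).

Definition removal_seq (D : seg) (h : mult) (l : list seg) : Prop :=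
  exists s1, first_ok D h s1 /\ rem_chain D h s1 l.

Definition seg_len (s : seg) : Z := sb s - sa s.

Definition non_overlapping (D D' : seg) (h : mult) : Prop :=
  forall l, removal_seq D h l ->
  forall Dbar, In Dbar l -> seg_mem Dbar (sa D' - 1) ->
    (forall E, In E l -> seg_mem E (sa D' - 1) -> seg_len Dbar <= seg_len E) ->
    ~ seg_sub D' Dbar.

(* The segments of a removal sequence are nested intervals, all ending at or
   after b(Delta).  Hence if Dbar is the shortest one containing a(Dt) - 1 and
   m the shortest one containing a(D') - 1 <= a(Dt) - 1, then m also contains
   a(Dt) - 1, and nestedness together with the minimality of Dbar forces
   b(Dbar) <= b(m).  So if Dt were contained in Dbar, then D', which starts
   after a(m) and ends at b(Dt) <= b(m), would be contained in m, contradicting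
   the non-overlapping property of (Delta, Delta', h). *)
From Stdlib Require Import ZArith List Lia Classical.
Open Scope Z_scope.

Definition encloses (s t : seg) : Prop := sa s <= sa t /\ sb t <= sb s.

Definition pairwise_nested (l : list seg) : Prop :=
  forall E F, In E l -> In F l -> encloses E F \/ encloses F E.

Definition shortest_with (P : seg -> Prop) (l : list seg) (m : seg) : Prop :=
  In m l /\ P m /\ forall E, In E l -> P E -> seg_len m <= seg_len E.

Lemma seg_lt_start_lt (s t : seg) : seg_lt s t -> sa s < sa t.
Proof.
  intros [[_ [Hst _]] Hb].
  destruct (Z_lt_ge_dec (sa s) (sa t)) as [|Hge]; [assumption|].
  exfalso; apply Hst; intros x Hx; unfold seg_mem in *; lia.
Qed.

Lemma linked_start_le_succ_end (s t : seg) :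
  seg_valid s -> seg_valid t -> linked s t -> sa t <= sb s + 1.
Proof.
  intros Hs Ht [[c [d Hcd]] _]; unfold seg_valid, seg_mem in *.
  destruct (Z_le_gt_dec (sa t) (sb s + 1)) as [|Hgap]; [assumption|].
  assert (c <= sa s <= d) by (apply Hcd; left; lia).
  assert (c <= sa t <= d) by (apply Hcd; right; lia).
  assert (Hmid : c <= sb s + 1 <= d) by lia.
  apply Hcd in Hmid; lia.
Qed.

Lemma rem_chain_encloses D h s l :
  rem_chain D h s l -> In s l /\ forall E, In E l -> encloses s E.
Proof.
  unfold encloses; induction 1 as [prev _ | prev s l Hok _ [_ IH]].
  - split; [left; reflexivity|]. intros E [<-|[]]; lia.
  - destruct Hok as [[_ [Ha [_ Hb]]] _].
    split; [left; reflexivity|].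
    intros E [<-|HE]; [lia|]. specialize (IH E HE); lia.
Qed.

Lemma rem_chain_pairwise_nested D h s l :
  rem_chain D h s l -> pairwise_nested l.
Proof.
  induction 1 as [prev _ | prev s l Hok Hc IH].
  - intros E F [<-|[]] [<-|[]]; left; unfold encloses; lia.
  - destruct (rem_chain_encloses _ _ _ _ Hc) as [_ Hin].
    destruct Hok as [[_ [Ha [_ Hb]]] _].
    intros E F [<-|HE] [<-|HF]; unfold encloses in *.
    + left; lia.
    + specialize (Hin F HF); left; lia.
    + specialize (Hin E HE); right; lia.
    + apply IH; assumption.
Qed.

Lemma rem_chain_end_ge D h s l :
  rem_chain D h s l -> sb D <= sb s -> forall E, In E l -> sb D <= sb E.
Proof.
  induction 1 as [prev _ | prev s l Hok _ IH]; intros Hb E.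
  - intros [<-|[]]; assumption.
  - destruct Hok as [[_ [_ [Hs _]]] _].
    intros [<-|HE]; [assumption|]. exact (IH Hs E HE).
Qed.

Lemma removal_seq_pairwise_nested D h l :
  removal_seq D h l -> pairwise_nested l.
Proof.
  intros [s1 [_ Hc]]; exact (rem_chain_pairwise_nested _ _ _ _ Hc).
Qed.

Lemma removal_seq_end_ge D h l :
  removal_seq D h l -> forall E, In E l -> sb D <= sb E.
Proof.
  intros [s1 [[_ [_ [Hb _]]] Hc]]; exact (rem_chain_end_ge _ _ _ _ Hc Hb).
Qed.

Lemma removal_seq_covers D h l x :
  removal_seq D h l -> sa D <= x <= sb D -> exists E, In E l /\ seg_mem E x.
Proof.
  intros [s1 [[_ [Ha [Hb _]]] Hc]] Hx.
  exists s1; split; [apply (rem_chain_encloses _ _ _ _ Hc)|].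
  unfold seg_mem; lia.
Qed.

Lemma exists_shortest_with (P : seg -> Prop) (l : list seg) :
  (exists E, In E l /\ P E) -> exists m, shortest_with P l m.
Proof.
  unfold shortest_with.
  induction l as [|x l IH]; intros [y [Hy Py]]; [destruct Hy|].
  destruct (classic (exists z, In z l /\ P z)) as [Hz|Hz].
  - destruct (IH Hz) as [m [Hm [Pm Hmin]]].
    destruct (classic (P x /\ seg_len x < seg_len m)) as [[Px Hlt]|Hn].
    + exists x; split; [left; reflexivity|]; split; [assumption|].
      intros E [<-|HE] PE; [lia|]. specialize (Hmin E HE PE); lia.
    + exists m; split; [right; assumption|]; split; [assumption|].
      intros E [<-|HE] PE; [|auto].
      destruct (Z_le_gt_dec (seg_len m) (seg_len x)); [assumption|].
      exfalso; apply Hn; split; [assumption|lia].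
  - destruct Hy as [<-|Hy]; [|exfalso; eauto].
    exists x; split; [left; reflexivity|]; split; [assumption|].
    intros E [<-|HE] PE; [lia|]. exfalso; eauto.
Qed.

Lemma shortest_containing_end_le (l : list seg) (x y : Z) (m Dbar : seg) :
  pairwise_nested l ->
  shortest_with (fun E => seg_mem E x) l m ->
  shortest_with (fun E => seg_mem E y) l Dbar ->
  seg_mem m y -> sb Dbar <= sb m.
Proof.
  intros Hnest [Hm _] [HDbar [_ Hmin]] Hmy.
  specialize (Hmin m Hm Hmy); unfold seg_len in Hmin.
  destruct (Hnest m Dbar Hm HDbar) as [[Ha Hb]|[Ha Hb]]; lia.
Qed.

Theorem mainTheorem18 (h : mult) (D D' : seg) :
  mult_valid h -> seg_valid D -> seg_valid D' ->
  admissible D h ->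
  seg_lt D D' ->
  non_overlapping D D' h ->
  forall Dt : seg, seg_valid Dt -> sb Dt = sb D' -> sa D' <= sa Dt ->
    linked D Dt ->
    non_overlapping D Dt h.
Proof.
  intros _ HD _ _ HDD' Hno Dt HDt Hbt Hat HDDt.
  pose proof (seg_lt_start_lt _ _ HDD') as Hstart.
  pose proof (linked_start_le_succ_end _ _ HD HDt HDDt) as Hgap.
  intros l Hl Dbar HDbar HDbar_mem HDbar_min Hsub.
  destruct (exists_shortest_with (fun E => seg_mem E (sa D' - 1)) l) as [m Hm].
  { apply (removal_seq_covers D h); [assumption|lia]. }
  pose proof Hm as [Hm_in [Hm_mem Hm_min]].
  apply (Hno l Hl m Hm_in Hm_mem Hm_min).
  pose proof (removal_seq_end_ge _ _ _ Hl m Hm_in) as Hm_end.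
  assert (Hend : sb Dbar <= sb m).
  { apply (shortest_containing_end_le l (sa D' - 1) (sa Dt - 1) m Dbar).
    - exact (removal_seq_pairwise_nested _ _ _ Hl).
    - exact Hm.
    - exact (conj HDbar (conj HDbar_mem HDbar_min)).
    - unfold seg_mem in *; lia. }
  assert (HDt_end := Hsub (sb Dt)).
  unfold seg_valid, seg_sub, seg_mem in *.
  intros z Hz; specialize (HDt_end ltac:(lia)); lia.
Qed.
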